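(* Let $G=A_{n,k}$ be an almost-path graph and let $\mathcal{I}$ be a lower order ideal in the poset (ordered by inclusion) of vertex sets $\varnothing\neq I\subseteq[n+1]$ with $G[I]$ connected. Then the ideal subarrangement $\mathcal{A}_{\mathcal{I}}:=\{H_I\mid I\in\mathcal{I}\}$ of $\mathcal{A}_G$ is MAT-free.
   Context: For $1\le k\le n$, the almost-path graph $A_{n,k}$ has vertex set $[n+1]$ and edges $\{i,i+1\}$ for $1\le i\le n-1$ together with $\{k,n+1\}$. For a graph $G$ on $[m]$, $H_I:=\ker(\sum_{i\in I}x_i)\subseteq\mathbb{Q}^m$ and $\mathcal{A}_G:=\{H_I\mid\varnothing\neq I\subseteq[m],\ G[I]\text{ connected}\}$. An arrangement $\mathcal{A}$ in $V$ is MAT-free if there is an ordered partition $(\pi_1|\dots|\pi_r)$ of $\mathcal{A}$ such that, with $\mathcal{A}_0:=\varnothing$ and $\mathcal{A}_k:=\pi_1\cup\dots\cup\pi_k$, for every $0\le k\le r-1$: (1) the hyperplanes of $\pi_{k+1}$ are linearly independent (rank $|\pi_{k+1}|$); (2) $\bigcap_{H\in\pi_{k+1}}H\not\subseteq\bigcup_{H'\in\mathcal{A}_k}H'$; (3) $|\mathcal{A}_k|-|\{H\cap H'\mid H'\in\mathcal{A}_k\}|=k$ for each $H\in\pi_{k+1}$. *)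

From HB Require Import structures.
From mathcomp Require Import all_boot all_order all_algebra.
Set Implicit Arguments. Unset Strict Implicit. Unset Printing Implicit Defensive.
Import GRing.Theory.
Local Open Scope ring_scope.

(* Vertices of a graph on [m] are represented by 'I_m (vertex i+1 <-> ordinal i). *)

(* The almost-path graph A_{n,k} on [n+1] (0-based: 'I_(n.+1)):
   edges {i,i+1} (1 <= i <= n-1), i.e. 0-based {j,j+1} with j+1 < n,
   plus the edge {k, n+1}, i.e. 0-based {k-1, n}. *)
Definition almost_path_edge (n k : nat) (i j : 'I_(n.+1)) : bool :=
  [|| ((i : nat).+1 == j) && (j < n)%N,
      ((j : nat).+1 == i) && (i < n)%N,
      ((i : nat) == k.-1) && ((j : nat) == n)
    | ((j : nat) == k.-1) && ((i : nat) == n)].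

(* G[I] is connected (I nonempty is required separately). *)
Definition induced_connected (m : nat) (G : rel 'I_m) (I : {set 'I_m}) : bool :=
  [forall x in I, forall y in I,
     connect [rel u v | [&& u \in I, v \in I & G u v]] x y].

Definition connected_sets (m : nat) (G : rel 'I_m) : {set {set 'I_m}} :=
  [set I : {set 'I_m} | (I != set0) && induced_connected G I].

Definition lower_ideal (m : nat) (G : rel 'I_m) (Id : {set {set 'I_m}}) : Prop :=
  Id \subset connected_sets G /\
  forall I J : {set 'I_m}, I \in Id -> J \in connected_sets G -> J \subset I -> J \in Id.

Definition ind_col (m : nat) (I : {set 'I_m}) : 'cV[rat]_m :=
  \col_(i < m) (if i \in I then 1 else 0).

Definition hyp (m : nat) (I : {set 'I_m}) : {vspace 'rV[rat]_m} :=
  lker (linfun (fun v : 'rV[rat]_m => v *m ind_col I)).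

Definition ideal_arr (m : nat) (Id : {set {set 'I_m}}) : seq {vspace 'rV[rat]_m} :=
  undup [seq hyp J | J <- enum Id].

(* MAT-free: an arrangement (as a finite set = seq up to duplicates) admits an
   ordered partition (pi_1|...|pi_r) satisfying (1)-(3). Block pi_{k+1} is
   nth [::] pis k (0-based), A_k = pi_1 ∪ ... ∪ pi_k = flatten (take k pis). *)
Definition MAT_free (K : fieldType) (vT : vectType K) (A : seq {vspace vT}) : Prop :=
  exists pis : seq (seq {vspace vT}),
    all (fun pi => pi != [::]) pis /\
    perm_eq (flatten pis) (undup A) /\
    forall k : nat, (k < size pis)%N ->
      let pi := nth [::] pis k in
      let Ak := flatten (take k pis) in
      let X := (\bigcap_(H <- pi) H)%VS in
      (* (1) the hyperplanes of pi_{k+1} are independent: rank = |pi_{k+1}| *)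
      (\dim {:vT} - \dim X)%N = size pi /\
      (exists2 v, v \in X & forall H', H' \in Ak -> v \notin H') /\
      (forall H, H \in pi ->
         (size Ak - size (undup [seq (H :&: H')%VS | H' <- Ak]))%N = k).

From mathcomp Require Import all_boot all_order all_algebra.
From mathcomp Require Import zify.
Set Implicit Arguments. Unset Strict Implicit. Unset Printing Implicit Defensive.
Import Order.TTheory GRing.Theory Num.Theory.

(* The connected vertex sets of A_{n,k} are the path segments, the segments through the
   attachment vertex k together with the pendant vertex n+1, and {n+1}.  Group the hyperplanes
   H_I by |I| = h, ordering each block by the largest vertex of I; these blocks form the
   partition.
   (1) Each H_I has a vector lying on the earlier hyperplanes of its block but not on H_I: a
   unit vector for a segment or {n+1}, and for {n+1} ∪ [c, d] the vector with entries 1 - h on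
   the path vertices congruent mod h to the vertex just after d, and 1 elsewhere; its sum over a
   set of size h vanishes exactly when the set meets that residue class once.
   (2) The same kind of vector for the residue class of k lies on every H_I with |I| = h and on
   no H_J with 0 < |J| < h.
   (3) For J ⊆ I, H_I ∩ H_J = H_I ∩ H_{I∖J}, and these are the only coincidences among the
   H_I ∩ H_J with |J| < |I|; so the number of intersections lost is the number of splittings of
   the tree G[I] into two connected pieces, namely |I| - 1. *)

Section Hyperplanes.
Variables (K : fieldType) (vT : vectType K).
Implicit Types (U H : {vspace vT}) (s : seq {vspace vT}).

Definition hyperplane H := \dim H == (\dim {:vT}).-1.

Lemma memv_bigcap v s : (v \in \bigcap_(H <- s) H)%VS = all (fun H => v \in H) s.
Proof.
elim: s => [|H s IH]; first by rewrite big_nil memvf.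
by rewrite big_cons memv_cap IH.
Qed.

Lemma dimv_cap_hyperplane U H : hyperplane H -> ~~ (U <= H)%VS ->
  \dim (U :&: H) = (\dim U).-1.
Proof.
move=> /eqP dimH nUH.
have dimU : (0 < \dim U)%N.
  by rewrite lt0n dimv_eq0; apply: contra nUH => /eqP ->; apply: sub0v.
have ltH : (\dim H < \dim (U + H))%N.
  rewrite ltn_neqAle dimvS ?addvSr // andbT.
  apply: contra nUH; rewrite (dimv_leqif_eq (addvSr U H)).2 => /eqP ->.
  exact: addvSl.
have := dimvS (subvf (U + H)); have := dimv_sum_cap U H; lia.
Qed.

Lemma dimv_bigcap_hyperplanes s : all hyperplane s ->
  (forall i, (i < size s)%N -> ~~ (\bigcap_(H <- take i s) H <= nth 0%VS s i)%VS) ->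
  (\dim (\bigcap_(H <- s) H) + size s)%N = \dim {:vT}.
Proof.
move=> /all_nthP hyp_s new_s.
suff /(_ (size s) (leqnn _)) : forall i, (i <= size s)%N ->
    (\dim (\bigcap_(H <- take i s) H) + i)%N = \dim {:vT}.
  by rewrite take_size.
elim=> [|i IH] lti; first by rewrite take0 big_nil addn0.
rewrite (take_nth 0%VS) // big_rcons /= dimv_cap_hyperplane ?hyp_s ?new_s //.
have := IH (ltnW lti); have := new_s i lti.
case: (posnP (\dim (\bigcap_(H <- take i s) H))) => [/eqP|]; last lia.
by rewrite dimv_eq0 => /eqP ->; rewrite sub0v.
Qed.

Lemma notsubv_bigcap_take s i v :
  (forall j, (j < i)%N -> v \in nth 0%VS s j) -> v \notin nth 0%VS s i ->
  ~~ (\bigcap_(H <- take i s) H <= nth 0%VS s i)%VS.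
Proof.
move=> v_prev v_i; apply: contra v_i => /subvP; apply.
rewrite memv_bigcap; apply/(all_nthP 0%VS) => j; rewrite size_take_min => ltj.
have lji : (j < i)%N by lia.
by rewrite nth_take // v_prev.
Qed.

End Hyperplanes.

Section SubsetSumHyperplanes.
Variable m : nat.
Local Open Scope ring_scope.
Implicit Types (I J : {set 'I_m}) (u v w : 'rV[rat]_m).

Definition sumv v J := \sum_(i in J) v 0 i.

Lemma mem_hyp v J : (v \in hyp J) = (sumv v J == 0).
Proof.
have sumE : (v *m ind_col J) 0 0 = sumv v J.
  rewrite !mxE /sumv [RHS]big_mkcond; apply: eq_bigr => i _.
  by rewrite mxE; case: (i \in J); rewrite ?mulr1 ?mulr0.
rewrite /hyp memv_ker (lfunE (mulmxr (ind_col J))) /=; apply/eqP/eqP => [/matrixP/(_ 0 0) | v0].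
  by rewrite sumE mxE.
by apply/matrixP => i j; rewrite !ord1 sumE v0 mxE.
Qed.

Lemma sumvD u w J : sumv (u + w) J = sumv u J + sumv w J.
Proof. by rewrite /sumv -big_split; apply: eq_bigr => i _; rewrite mxE. Qed.

Lemma sumvB u w J : sumv (u - w) J = sumv u J - sumv w J.
Proof. by rewrite /sumv -sumrB; apply: eq_bigr => i _; rewrite !mxE. Qed.

Lemma sumv_delta a J : sumv (delta_mx 0 a) J = (a \in J)%:R.
Proof.
rewrite /sumv (eq_bigr (fun i => (i == a)%:R)) => [|i _]; last by rewrite mxE eq_sym.
case: (boolP (a \in J)) => aJ; last first.
  by rewrite big1 // => i iJ; case: eqP => // ia; rewrite -ia iJ in aJ.
by rewrite (bigD1 a) //= eqxx big1 ?addr0 // => i /andP[_ /negbTE ->].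
Qed.

Lemma delta_notin_hyp a J : (delta_mx 0 a \notin hyp J) = (a \in J).
Proof. by rewrite mem_hyp sumv_delta; case: (a \in J); rewrite ?oner_eq0 ?eqxx. Qed.

Lemma hyp_inj : injective (@hyp m).
Proof. by move=> I J eqIJ; apply/setP => a; rewrite -!delta_notin_hyp eqIJ. Qed.

Lemma dim_rV : \dim (fullv : {vspace 'rV[rat]_m}) = m.
Proof. by rewrite dimvf; exact: (etrans (dim_matrix _ 1 m) (mul1n m)). Qed.

Lemma dim_hyp J : J != set0 -> \dim (hyp J) = m.-1.
Proof.
case/set0Pn => a aJ.
set f := linfun (fun v : 'rV[rat]_m => v *m ind_col J).
have := limg_ker_dim f fullv; rewrite capfv dim_rV.
suff -> : \dim (f @: fullv) = 1%N by move=> e; rewrite -[in RHS]e addn1.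
apply/eqP; rewrite eqn_leq (leq_trans (dimvS (subvf _))) ?dimvf ?dim_matrix //=.
rewrite lt0n dimv_eq0; apply: contraTneq aJ => img0.
have : delta_mx 0 a \in hyp J by rewrite memv_ker -memv0 -img0 memv_img ?memvf.
by rewrite -delta_notin_hyp => ->.
Qed.

Lemma hyperplane_hyp J : J != set0 -> hyperplane (hyp J).
Proof. by move=> J0; rewrite /hyperplane dim_hyp // dim_rV. Qed.

Lemma sumv_setD v I J : J \subset I -> sumv v I = sumv v J + sumv v (I :\: J).
Proof. by move=> /setIidPr sJI; rewrite /sumv (big_setID J) sJI. Qed.

Lemma hyp_capD I J : J \subset I -> (hyp I :&: hyp J = hyp I :&: hyp (I :\: J))%VS.
Proof.
move=> sJI; apply/vspaceP => v; rewrite !memv_cap !mem_hyp (sumv_setD v sJI).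
case: (eqVneq (sumv v J) 0) => [->|nzJ]; first by rewrite add0r andbT andbb.
case: (eqVneq (sumv v (I :\: J)) 0) => [->|nzD]; last by rewrite !andbF.
by rewrite addr0 (negbTE nzJ).
Qed.

Lemma eq_hyp_cap I J J' : (hyp I :&: hyp J = hyp I :&: hyp J')%VS ->
  ~~ (I \subset J) -> ~~ (I \subset J') -> J = J' \/ J \subset I /\ J' = I :\: J.
Proof.
move=> eqIJ /subsetPn[c cI cJ] /subsetPn[d dI dJ'].
have same v : sumv v I = 0 -> (sumv v J == 0) = (sumv v J' == 0).
  by move=> vI; move/vspaceP/(_ v): eqIJ; rewrite !memv_cap !mem_hyp vI eqxx.
have out a : a \notin I -> (a \in J) = (a \in J').
  move=> aI; have := same 'e_a; rewrite !sumv_delta (negbTE aI) => /(_ erefl).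
  by rewrite !pnatr_eq0 !eqb0 => /negb_inj.
have inside a : a \in I -> (a \in J) = (a \in J') (+) (c \in J').
  move=> aI; have := same ('e_a - 'e_c); rewrite !sumvB !sumv_delta aI cI (negbTE cJ).
  rewrite subrr subr0 subr_eq0 pnatr_eq0 eqr_nat => /(_ erefl).
  by case: (a \in J); case: (a \in J'); case: (c \in J').
case: (boolP (c \in J')) => cJ'; last first.
  by left; apply/setP => a; case: (boolP (a \in I)) => [/inside|/out]; rewrite ?(negbTE cJ') ?addbF.
have sJI : J \subset I.
  apply/subsetP => a aJ; apply: contraT => aI.
  have dJ : d \in J by rewrite inside // cJ' (negbTE dJ').
  have := same ('e_a - 'e_d + 'e_c); rewrite !(sumvD ('e_a - 'e_d)) !sumvB !sumv_delta.
  rewrite (negbTE aI) dI cI aJ -(out a aI) aJ dJ (negbTE cJ) (negbTE dJ') cJ' subrr add0r.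
  by move=> /(_ erefl); rewrite subr0 -natrD !pnatr_eq0.
right; split => //; apply/setP => a; rewrite inE.
case: (boolP (a \in I)) => [aI | aI]; first by rewrite inside // cJ' addbT andbT negbK.
by rewrite -out // (contraNF (subsetP sJI a) aI).
Qed.

End SubsetSumHyperplanes.

Section CutsOfLowerIdeal.
Variables (m : nat) (G : rel 'I_m) (Id : {set {set 'I_m}}).
Hypothesis IdG : lower_ideal G Id.
Implicit Types (J : {set 'I_m}).

(* When [G[I]] is a tree, these are the components containing [a] left by deleting a
   single edge, so there are [#|I| - 1] of them. *)
Definition cuts (I : {set 'I_m}) (a : 'I_m) :=
  [set J : {set 'I_m} | [&& J \subset I, a \in J, J != I, J \in connected_sets G
                       & I :\: J \in connected_sets G]].

Variables (I : {set 'I_m}) (a : 'I_m) (L : seq {set 'I_m}).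
Hypotheses (II : I \in Id) (aI : a \in I).
Hypothesis memL : forall J, (J \in L) = (J \in Id) && (#|J| < #|I|)%N.

Lemma lower_not_supset J : J \in L -> ~~ (I \subset J).
Proof. by rewrite memL => /andP[_]; apply: contraL => /subset_leq_card; rewrite -leqNgt. Qed.

Lemma lower_connected J : J \in L -> J \in connected_sets G.
Proof. by rewrite memL => /andP[/(subsetP IdG.1)]. Qed.

Lemma mem_lower_proper J : J \in connected_sets G -> J \proper I -> J \in L.
Proof. by move=> JG JI; rewrite memL (IdG.2 I J II JG (proper_sub JI)) proper_card. Qed.

Lemma cut_lower J : J \in cuts I a -> J \in L /\ I :\: J \in L.
Proof.
rewrite inE => /and5P[sJI aJ JI JG DG].
split; apply: mem_lower_proper; rewrite // properEneq ?JI ?subsetDl // andbT.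
by apply: contraTneq aJ => eqDI; move: aI; rewrite -{1}eqDI inE => /andP[].
Qed.

Lemma noncut_cap_hyp_inj J J' : J \in L -> J' \in L -> J \notin cuts I a -> J' \notin cuts I a ->
  (hyp I :&: hyp J = hyp I :&: hyp J')%VS -> J = J'.
Proof.
move=> LJ LJ' QJ QJ' eqg.
have [//|[sJI DJ]] := eq_hyp_cap eqg (lower_not_supset LJ) (lower_not_supset LJ'); exfalso.
have neqI K : K \in L -> K != I by move/lower_not_supset; apply: contraNneq => ->.
case: (boolP (a \in J)) => aJ.
  by move: QJ; rewrite inE sJI aJ (neqI _ LJ) (lower_connected LJ) -DJ (lower_connected LJ').
move: QJ'; rewrite inE (neqI _ LJ') (lower_connected LJ') DJ subsetDl in_setD aJ aI.
by rewrite setDDr setDv set0U (setIidPr sJI) (lower_connected LJ).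
Qed.

Lemma size_undup_cap_hyp : uniq L ->
  (size (undup [seq (hyp I :&: hyp J)%VS | J <- L]) + #|cuts I a|)%N = size L.
Proof.
move=> uL; set g := fun J => (hyp I :&: hyp J)%VS.
have sizeQ : size (filter (mem (cuts I a)) L) = #|cuts I a|.
  rewrite -(card_uniqP (filter_uniq _ uL)); apply: eq_card => J.
  by rewrite mem_filter andb_idr // => /cut_lower[].
rewrite -sizeQ -[in RHS](count_predC (mem (cuts I a))) -!size_filter addnC; congr (_ + _).
rewrite -(size_map g); apply/perm_size/uniq_perm; first exact: undup_uniq.
  rewrite map_inj_in_uniq ?filter_uniq // => J J'; rewrite !mem_filter /=.
  by move=> /andP[QJ LJ] /andP[QJ' LJ']; apply: noncut_cap_hyp_inj.
move=> x; rewrite mem_undup; apply/mapP/mapP => [[J LJ ->] | [J]]; last first.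
  by rewrite mem_filter => /andP[_ LJ] ->; exists J.
case: (boolP (J \in cuts I a)) => QJ; last by exists J; rewrite // mem_filter /= QJ.
have [_ LD] := cut_lower QJ.
move: (QJ); rewrite inE => /and5P[sJI aJ _ _ _].
exists (I :\: J); last exact: hyp_capD.
by rewrite mem_filter LD andbT /= inE in_setD aJ /= andbF.
Qed.

End CutsOfLowerIdeal.

Lemma eq_modn_close a b h : a = b %[mod h] -> (a < b + h)%N -> (b < a + h)%N -> a = b.
Proof.
wlog ab : a b / (a <= b)%N => [wl e lt1 lt2|e _ lt].
  by case: (leqP a b) => [|/ltnW] ab; [apply: wl | apply/esym/wl].
have : (h %| b - a)%N by rewrite -eqn_mod_dvd // e.
by case: (posnP (b - a)) => [|/dvdn_leq le /le]; lia.
Qed.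

Lemma modn_shift_exists c r h : (0 < h)%N -> exists2 t, (t < h)%N & (c + t = r %[mod h]).
Proof.
move=> h0; have cle : (c <= c * h + r)%N by nia.
(* Then [c + t = c * h + r = r] modulo [h]. *)
exists ((c * h + r - c) %% h); first exact: ltn_pmod.
by rewrite modnDmr addnBA // addnC addnK modnMDl.
Qed.

Section AlmostPathGraph.
Variables n k : nat.
Hypotheses (k_ge1 : (1 <= k)%N) (k_le_n : (k <= n)%N).

(* 0-based: the path is 0, ..., n-1 and the pendant vertex [o] (numbered n) hangs off [k.-1]. *)
Local Notation V := 'I_n.+1.
Local Notation G := (@almost_path_edge n k).
Local Notation o := (@ord_max n).
Implicit Types (T : {set V}).

Definition pv : V := inord k.-1.

Lemma pred_k_lt_n : (k.-1 < n)%N. Proof. lia. Qed.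

Lemma pvE : pv = k.-1 :> nat.
Proof. by rewrite inordK //; have := pred_k_lt_n; lia. Qed.

Lemma lt_n_neq_o (u : V) : (u < n)%N = (u != o).
Proof. by rewrite -val_eqE /=; have := ltn_ord u; lia. Qed.

Lemma almost_path_edge_sym : symmetric G.
Proof. by move=> u v; rewrite /almost_path_edge; lia. Qed.

Definition edge_in (T : {set V}) := [rel u v : V | [&& u \in T, v \in T & G u v]].

Lemma edge_in_sym T : symmetric (edge_in T).
Proof. by move=> u v /=; rewrite almost_path_edge_sym andbCA. Qed.

Definition seg c d : {set V} := [set i : V | (c <= i <= d)%N && (i < n)%N].

Lemma o_notin_seg c d : o \notin seg c d.
Proof. by rewrite inE /=; lia. Qed.

Definition almost_path_convex (T : {set V}) :=
  (forall x y z : V, x \in T -> y \in T -> (x <= z <= y)%N -> (y < n)%N -> z \in T) /\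
  (o \in T -> (exists2 v : V, v \in T & (v < n)%N) -> pv \in T).

Inductive connected_shape : {set V} -> Prop :=
  | SegShape c d of (c <= d < n)%N : connected_shape (seg c d)
  | ForkShape c d of (c <= k.-1 <= d)%N & (d < n)%N : connected_shape (o |: seg c d)
  | PendantShape : connected_shape [set o].

Lemma induced_connected_convex T : induced_connected G T -> almost_path_convex T.
Proof.
move=> /forallP connT.
have connT' x y : x \in T -> y \in T -> connect (edge_in T) x y.
  by move=> xT yT; move/implyP/(_ xT)/forallP/(_ y)/implyP/(_ yT): (connT x).
split.
- move=> x y z xT yT /andP[xz zy] yn; apply: contraT => zT.
  (* The vertices below [z], together with [o] when it hangs below [z], are closed in [T]. *)
  pose A := [pred u : V | (u < z)%N || ((u == n :> nat) && (k.-1 < z)%N)].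
  have clA : closed (edge_in T) A.
    move=> u v /and3P[uT vT]; rewrite /almost_path_edge => e.
    have uz : (u : nat) != z by apply: contraNneq zT => /val_inj <-.
    have vz : (v : nat) != z by apply: contraNneq zT => /val_inj <-.
    rewrite !inE; have := ltn_ord u; have := ltn_ord v; have := pred_k_lt_n; lia.
  have := closed_connect clA (connT' x y xT yT); rewrite !inE.
  have xz' : (x : nat) != z by apply: contraNneq zT => /val_inj <-.
  have yz' : (y : nat) != z by apply: contraNneq zT => /val_inj <-.
  lia.
- move=> oT [v vT vn]; apply: contraT => pT.
  have clo : closed (edge_in T) [pred u : V | u == n :> nat].
    move=> u w /and3P[uT wT]; rewrite /almost_path_edge => e.
    have up : (u : nat) != k.-1 by rewrite -pvE; apply: contraNneq pT => /val_inj <-.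
    have wp : (w : nat) != k.-1 by rewrite -pvE; apply: contraNneq pT => /val_inj <-.
    rewrite !inE /=; have := ltn_ord u; have := ltn_ord w; have := pred_k_lt_n; lia.
  by have := closed_connect clo (connT' o v oT vT); rewrite !inE /=; lia.
Qed.

Lemma connect_seg (T : {set V}) (a b : V) : (a <= b < n)%N ->
  (forall z : V, (a <= z <= b)%N -> z \in T) -> connect (edge_in T) a b.
Proof.
move=> /andP[ab bn] inT.
suff /(_ (b - a)%N (leqnn _)) : forall d, (d <= b - a)%N -> connect (edge_in T) a (inord (a + d)).
  by rewrite subnKC // inord_val.
elim=> [|d IH] ld; first by rewrite addn0 inord_val connect0.
apply: connect_trans (IH (ltnW ld)) (connect1 _).
rewrite /= !inT ?inordK; try lia.
by rewrite /almost_path_edge !inordK; lia.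
Qed.

Lemma convex_induced_connected T : almost_path_convex T -> induced_connected G T.
Proof.
move=> [convT convo]; have symT := sym_connect_sym (edge_in_sym T).
have path_conn x y : x \in T -> y \in T -> (x < n)%N -> (y < n)%N -> connect (edge_in T) x y.
  move=> xT yT xn yn; wlog xy : x y xT yT xn yn / (x <= y)%N.
    move=> wl; case: (leqP x y) => xy; first exact: wl.
    by rewrite symT; apply: wl => //; apply: ltnW.
  by apply: connect_seg => [|z xzy]; [lia | apply: convT xT yT xzy yn].
have o_conn x : x \in T -> (x < n)%N -> o \in T -> connect (edge_in T) x o.
  move=> xT xn oT; have pT : pv \in T by apply: convo => //; exists x.
  apply: connect_trans (path_conn _ _ xT pT xn _) (connect1 _); first by rewrite pvE pred_k_lt_n.
  by rewrite /= pT oT /almost_path_edge pvE /=; lia.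
apply/forallP => x; apply/implyP => xT; apply/forallP => y; apply/implyP => yT.
move: xT yT; case: (eqVneq x o) => [->|xo]; case: (eqVneq y o) => [->|yo] xT yT.
- exact: connect0.
- by rewrite symT; apply: o_conn; rewrite ?lt_n_neq_o.
- by apply: o_conn; rewrite ?lt_n_neq_o.
- by apply: path_conn; rewrite ?lt_n_neq_o.
Qed.

Lemma convex_connected_shape T : T != set0 -> almost_path_convex T -> connected_shape T.
Proof.
move=> T0 [convT convo].
have inP (i : V) : (i \in T :\ o) = (i \in T) && (i < n)%N by rewrite !inE lt_n_neq_o andbC.
have [P0 | [x0 x0P]] := set_0Vmem (T :\ o).
  suff -> : T = [set o] by apply: PendantShape.
  by move/eqP: P0; rewrite setD_eq0 subset1 (negbTE T0) orbF => /eqP.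
have [c cP cmin] := @arg_minnP _ x0 (fun i => i \in T :\ o) val x0P.
have [d dP dmax] := @arg_maxnP _ x0 (fun i => i \in T :\ o) val x0P.
move: (cP) (dP); rewrite !inP => /andP[cT cn] /andP[dT dn].
have PE : T :\ o = seg c d.
  apply/setP => i; rewrite [i \in seg c d]inE; apply/idP/idP => [iP | /andP[cid iN]].
    have := cmin i iP; have := dmax i iP; move: iP; rewrite inP => /andP[_ iN] /=; lia.
  by rewrite inP iN andbT; apply: (convT c d).
have cd : (c <= d)%N by apply: cmin.
case: (boolP (o \in T)) => oT.
  have pT : pv \in T by apply: convo => //; exists c.
  have : pv \in seg c d by rewrite -PE inP pT pvE pred_k_lt_n.
  rewrite inE pvE => /andP[cpd _].
  suff -> : T = o |: seg c d by apply: ForkShape.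
  by rewrite -PE setD1K.
suff -> : T = seg c d by apply: SegShape; rewrite cd.
by rewrite -PE; apply/setP => i; rewrite !inE; case: eqVneq => // ->; apply/negbTE.
Qed.

Lemma connected_shape_convex T : connected_shape T -> T != set0 /\ almost_path_convex T.
Proof.
case=> [c d /andP[cd dn] | c d /andP[cp pd] dn |].
- split; first by apply/set0Pn; exists (inord c); rewrite inE inordK; lia.
  by split=> [x y z|]; rewrite ?(negbTE (o_notin_seg _ _)) // !inE; lia.
- split; first by apply/set0Pn; exists o; rewrite setU11.
  split=> [x y z|_ _]; last by rewrite !inE pvE; lia.
  by rewrite !inE -!val_eqE /=; have := ltn_ord x; lia.
- split; first by apply/set0Pn; exists o; rewrite inE.
  by split=> [x y z|_ [v]]; rewrite !inE -!val_eqE /=; lia.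
Qed.

Lemma mem_connected_sets T : T \in connected_sets G <-> connected_shape T.
Proof.
rewrite inE; split=> [/andP[T0 /induced_connected_convex] | /connected_shape_convex[T0 convT]].
  exact: convex_connected_shape.
by rewrite T0 convex_induced_connected.
Qed.

Lemma card_seg c d : (c <= d.+1)%N -> (d < n)%N -> #|seg c d| = (d.+1 - c)%N.
Proof.
move=> cd dn.
have -> : seg c d = [set inord (c + j) | j : 'I_(d.+1 - c)].
  apply/setP => i; rewrite inE; apply/idP/imsetP => [iseg | [j _ ->]].
    have lt : (i - c < d.+1 - c)%N by lia.
    by exists (Ordinal lt) => //; apply: val_inj; rewrite /= inordK; lia.
  by rewrite inordK; have := ltn_ord j; lia.
rewrite card_imset ?card_ord // => j1 j2 /(congr1 val).
have := ltn_ord j1; have := ltn_ord j2; move=> lt2 lt1.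
rewrite /= !inordK; try lia.
by move=> e; apply: val_inj => /=; lia.
Qed.

Lemma card_fork c d : (c <= d.+1)%N -> (d < n)%N -> #|o |: seg c d| = (d.+1 - c).+1.
Proof. by move=> cd dn; rewrite cardsU1 o_notin_seg card_seg. Qed.

Lemma connected_shape_shrink T : connected_shape T -> (1 < #|T|)%N ->
  exists2 T', connected_shape T' & T' \subset T /\ #|T'| = #|T|.-1.
Proof.
case=> [c d /andP[cd dn] | c d /andP[cp pd] dn |]; last by rewrite cards1.
- rewrite card_seg; try lia; move=> cd'.
  exists (seg c d.-1); first by apply: SegShape; lia.
  by split; [apply/subsetP => i; rewrite !inE; lia | rewrite card_seg; lia].
- rewrite card_fork; try lia; move=> _.
  case: (ltnP k.-1 d) => pd'.
    exists (o |: seg c d.-1); first by apply: ForkShape; lia.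
    by split; [apply/subsetP => i; rewrite !inE; lia | rewrite card_fork; lia].
  case: (ltnP c k.-1) => cp'.
    exists (o |: seg c.+1 d); first by apply: ForkShape; lia.
    by split; [apply/subsetP => i; rewrite !inE; lia | rewrite card_fork; lia].
  exists (seg c c); first by apply: SegShape; lia.
  by split; [apply/subsetP => i; rewrite !inE; lia | rewrite card_seg; lia].
Qed.

Lemma connected_shape_subset_of_card T j : connected_shape T -> (1 <= j <= #|T|)%N ->
  exists2 T', connected_shape T' & T' \subset T /\ #|T'| = j.
Proof.
move=> sT /andP[j1 jT]; move Ed: (#|T| - j)%N => d.
elim: d T sT jT Ed => [|d IH] T sT jT Ed.
  by exists T => //; split => //; lia.
have [S sS [subS cS]] := connected_shape_shrink sT (ltac:(lia)).
have [T' sT' [subT cT']] := IH S sS (ltac:(lia)) (ltac:(lia)).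
by exists T' => //; split => //; apply: subset_trans subT subS.
Qed.

Local Open Scope ring_scope.

Definition residue_row h r : 'rV[rat]_n.+1 :=
  \row_(i < n.+1) if (i < n)%N && (i == r %[mod h]) then 1 - h%:R else 1.

Definition residue_count h r (T : {set V}) :=
  #|[set i in T | (i < n)%N && (i == r %[mod h])]|.

Lemma sumv_residue_row h r T :
  sumv (residue_row h r) T = #|T|%:R - h%:R * (residue_count h r T)%:R.
Proof.
rewrite /sumv (eq_bigr (fun i : V => 1 - h%:R * ((i < n)%N && (i == r %[mod h]))%:R)).
  rewrite sumrB sumr_const -mulr_sumr -natr_sum; congr (_ - _ * _%:R).
  rewrite /residue_count -sum1_card big_mkcond [RHS]big_mkcond /=.
  by apply: eq_bigr => i _; rewrite inE; case: (i \in T) => //=; case: (_ && _).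
by move=> i _; rewrite mxE; case: ifP; rewrite ?mulr1 ?mulr0 ?subr0.
Qed.

Lemma residue_row_hyp h r T : (0 < h)%N -> #|T| = h ->
  (residue_row h r \in hyp T) = (residue_count h r T == 1)%N.
Proof.
move=> h0 cT; rewrite mem_hyp sumv_residue_row cT subr_eq0 -natrM eqr_nat.
by rewrite -{1}[h]muln1 eqn_mul2l (gtn_eqF h0) eq_sym.
Qed.

Lemma residue_row_notin_hyp h r T : (0 < #|T| < h)%N -> residue_row h r \notin hyp T.
Proof.
move=> /andP[T0 Th]; rewrite mem_hyp sumv_residue_row subr_eq0 -natrM eqr_nat.
by case: (residue_count h r T) => [|c]; rewrite ?muln0; nia.
Qed.

Local Close Scope ring_scope.

Lemma residue_count_setU1o h r T : residue_count h r (o |: T) = residue_count h r T.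
Proof.
by apply: eq_card => i; rewrite !inE; case: eqVneq => [->|_] /=; rewrite ?ltnn ?andbF.
Qed.

Lemma residue_count_seg h r c d (i : V) : (0 < h)%N -> (d.+1 - c <= h)%N ->
  i \in seg c d -> i = r %[mod h] -> residue_count h r (seg c d) = 1.
Proof.
move=> h0 dch iseg ir; apply/eqP; rewrite eqn_leq; apply/andP; split.
  apply/card_le1_eqP => x y; rewrite !inE => /and3P[/andP[/andP[cx xd] _] _ /eqP xr].
  move=> /and3P[/andP[/andP[cy yd] _] _ /eqP yr]; apply: val_inj => /=.
  by apply: (@eq_modn_close _ _ h); [rewrite xr yr | lia | lia].
by apply/card_gt0P; exists i; move: iseg; rewrite !inE ir eqxx => /andP[-> ->].
Qed.

Lemma residue_count_window h r c d : (0 < h)%N -> (d.+1 - c = h)%N -> (d < n)%N ->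
  residue_count h r (seg c d) = 1.
Proof.
move=> h0 dch dn; have [t th ctr] := modn_shift_exists c r h0.
by apply: (@residue_count_seg _ _ _ _ (inord (c + t))); rewrite ?inE ?inordK ?ctr //; lia.
Qed.

Lemma residue_count_short h c d : (0 < h)%N -> (d.+2 = c + h)%N ->
  residue_count h d.+1 (seg c d) = 0.
Proof.
move=> h0 dch; apply/eqP; rewrite cards_eq0; apply/eqP/setP => i; rewrite !inE.
apply/negP => /and3P[/andP[/andP[ci id] _] _ /eqP ir].
by have := eq_modn_close ir (ltac:(lia)) (ltac:(lia)); lia.
Qed.

Lemma residue_count_overlapping_seg h c d c' d' q : (0 < h)%N ->
  d.+2 = c + h -> d'.+2 = c' + h -> (c <= q <= d)%N -> (c' <= q <= d')%N -> (d' < n)%N ->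
  c != c' -> residue_count h d.+1 (seg c' d') = 1.
Proof.
move=> h0 dch dch' cqd cqd' dn neq; have [t th ctr] := modn_shift_exists c' d.+1 h0.
have tlt : (t < h.-1)%N.
  rewrite ltn_neqAle -ltnS prednK // th andbT; apply: contraNneq neq => et.
  have chE : d.+1 = c + h.-1 by lia.
  move/eqP: ctr; rewrite chE et eqn_modDr => /eqP /eq_modn_close eqc.
  by rewrite eqc ?negbK //; lia.
by apply: (@residue_count_seg _ _ _ _ (inord (c' + t))); rewrite ?inE ?inordK ?ctr //; lia.
Qed.

Lemma seg_connected c d : (c <= d < n)%N -> seg c d \in connected_sets G.
Proof. by move=> cd; apply/mem_connected_sets/SegShape. Qed.

Lemma fork_connected c d : (c <= k.-1 <= d)%N -> (d < n)%N -> o |: seg c d \in connected_sets G.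
Proof. by move=> cpd dn; apply/mem_connected_sets/ForkShape. Qed.

Lemma seg_injr c v w : (c <= v < n)%N -> (c <= w < n)%N -> seg c v = seg c w -> v = w.
Proof.
move=> cv cw e; have := e; move/setP => /(_ (inord v)); move/setP: e => /(_ (inord w)).
by rewrite !inE !inordK; lia.
Qed.

Lemma cuts_seg c d : (c <= d < n)%N ->
  cuts G (seg c d) (inord c) = [set seg c v.-1 | v : V in seg c.+1 d].
Proof.
move=> cd; apply/setP => J; rewrite inE; apply/and5P/imsetP => [[sJI cJ JI JG _] | [v]].
  have := sJI; have := JI; have := cJ.
  case/mem_connected_sets: JG => [c' d' cd' | c' d' _ _ | ] cJ' JI' sJI'; last first.
  - by move/subsetP/(_ o): sJI'; rewrite (negbTE (o_notin_seg _ _)) inE eqxx => /(_ isT).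
  - by move/subsetP/(_ o): sJI'; rewrite (negbTE (o_notin_seg _ _)) setU11 => /(_ isT).
  have [c'I d'I] : inord c' \in seg c d /\ inord d' \in seg c d.
    by split; apply: (subsetP sJI'); rewrite inE inordK; lia.
  move: c'I d'I cJ'; rewrite !inE !inordK; try lia; move=> c'I d'I cJ'.
  have dd : (d' < d)%N.
    rewrite ltn_neqAle; apply/andP; split; last lia.
    by apply: contraNneq JI' => dd; apply/eqP/setP => i; rewrite !inE; lia.
  exists (inord d'.+1); first by rewrite inE inordK; lia.
  by apply/setP => i; rewrite !inE inordK; lia.
rewrite inE => vseg ->; have vd : (c < v <= d < n)%N by move: vseg; lia.
split.
- by apply/subsetP => i; rewrite !inE; lia.
- by rewrite inE inordK; lia.
- by apply/eqP => /setP/(_ v); rewrite !inE; lia.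
- by apply: seg_connected; lia.
- rewrite (_ : _ :\: _ = seg v d); first by apply: seg_connected; lia.
  by apply/setP => i; rewrite !inE; lia.
Qed.

Lemma card_cuts_seg c d : (c <= d < n)%N -> #|cuts G (seg c d) (inord c)| = #|seg c d|.-1.
Proof.
move=> cd; rewrite cuts_seg // card_in_imset => [|v w]; first by rewrite !card_seg; lia.
by rewrite !inE => vs ws e; apply: val_inj => /=; have := seg_injr _ _ e; lia.
Qed.

(* The component of [o] left by deleting from the tree [o |: seg c d] the edge that joins [v]
   to its neighbour on the side of [o]. *)
Definition fork_cut c d (v : V) : {set V} :=
  [set u in o |: seg c d | (u == o) || ((v < k.-1) && (v < u))%N || ((k.-1 < v) && (u < v))%N].

Lemma fork_cut_split c d (v : V) : (c <= k.-1 <= d)%N -> (d < n)%N -> v \in seg c d ->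
  fork_cut c d v \in connected_sets G /\ (o |: seg c d) :\: fork_cut c d v \in connected_sets G.
Proof.
move=> cpd dn; rewrite inE => vseg.
case: (ltngtP v k.-1) => vp.
- have -> : fork_cut c d v = o |: seg v.+1 d.
    by apply/setP => u; rewrite !inE -!val_eqE /=; have := ltn_ord u; lia.
  have -> : (o |: seg c d) :\: (o |: seg v.+1 d) = seg c v.
    by apply/setP => u; rewrite !inE -!val_eqE /=; have := ltn_ord u; lia.
  by split; [apply: fork_connected | apply: seg_connected]; lia.
- have -> : fork_cut c d v = o |: seg c v.-1.
    by apply/setP => u; rewrite !inE -!val_eqE /=; have := ltn_ord u; lia.
  have -> : (o |: seg c d) :\: (o |: seg c v.-1) = seg v d.
    by apply/setP => u; rewrite !inE -!val_eqE /=; have := ltn_ord u; lia.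
  by split; [apply: fork_connected | apply: seg_connected]; lia.
- have -> : fork_cut c d v = [set o].
    by apply/setP => u; rewrite !inE -!val_eqE /=; have := ltn_ord u; lia.
  have -> : (o |: seg c d) :\: [set o] = seg c d.
    by apply/setP => u; rewrite !inE -!val_eqE /=; have := ltn_ord u; lia.
  by split; [apply/mem_connected_sets/PendantShape | apply: seg_connected]; lia.
Qed.

Lemma cuts_fork c d : (c <= k.-1 <= d)%N -> (d < n)%N ->
  cuts G (o |: seg c d) o = fork_cut c d @: seg c d.
Proof.
move=> cpd dn; apply/setP => J; rewrite inE.
apply/and5P/imsetP => [[sJI oJ JI JG DG] | [v vseg ->]].
  move: sJI JI oJ DG; case/mem_connected_sets: JG => [c' d' _ | c' d' cpd' dn' | ] sJI JI oJ DG.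
  - by rewrite (negbTE (o_notin_seg _ _)) in oJ.
  - have [c'I d'I] : inord c' \in o |: seg c d /\ inord d' \in o |: seg c d.
      by split; apply: (subsetP sJI); rewrite !inE inordK; lia.
    move: c'I d'I; rewrite !inE -!val_eqE /= !inordK; try lia; move=> c'I d'I.
    have not_both : ~ ((c < c')%N /\ (d' < d)%N).
      have [_ [convD _]] := connected_shape_convex (proj1 (mem_connected_sets _) DG).
      move=> [cc' dd']; have := convD (inord c) (inord d) pv.
      by rewrite !inE -!val_eqE /= pvE !inordK; lia.
    have [cc' | dd'] : (c < c')%N \/ (d' < d)%N.
      case: (ltnP c c') => [|c'c]; [by left | right].
      rewrite ltn_neqAle; apply/andP; split; last lia.
      by apply: contraNneq JI => dd; apply/eqP/setP => u; rewrite !inE; lia.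
    + exists (inord c'.-1); first by rewrite inE inordK; lia.
      by apply/setP => u; rewrite !inE -!val_eqE /= inordK; have := ltn_ord u; lia.
    + exists (inord d'.+1); first by rewrite inE inordK; lia.
      by apply/setP => u; rewrite !inE -!val_eqE /= inordK; have := ltn_ord u; lia.
  - exists pv; first by rewrite inE pvE; lia.
    by apply/setP => u; rewrite !inE -!val_eqE /= pvE; have := ltn_ord u; lia.
have [JG DG] := fork_cut_split cpd dn vseg.
split=> //; first by apply/subsetP => u; rewrite inE => /andP[].
- by rewrite !inE eqxx.
- by apply/eqP => /setP/(_ v); move: vseg; rewrite !inE -!val_eqE /=; lia.
Qed.

Lemma card_cuts_fork c d : (c <= k.-1 <= d)%N -> (d < n)%N ->
  #|cuts G (o |: seg c d) o| = #|o |: seg c d|.-1.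
Proof.
move=> cpd dn; rewrite cuts_fork // card_in_imset => [|v w vseg wseg e].
  by rewrite cardsU1 o_notin_seg.
apply/val_inj/eqP; move/setP: e => e; have := e v; have := e w; move: vseg wseg.
by rewrite !inE -!val_eqE /=; lia.
Qed.

Lemma card_cuts T : connected_shape T -> exists2 a, a \in T & #|cuts G T a| = #|T|.-1.
Proof.
case=> [c d cd | c d cpd dn |].
- by exists (inord c); [rewrite inE inordK; lia | apply: card_cuts_seg].
- by exists o; [apply: setU11 | apply: card_cuts_fork].
- exists o; rewrite ?inE // cards1; apply/eqP; rewrite cards_eq0; apply/eqP/setP => J.
  by rewrite !inE eqEsubset; apply/negP => /and5P[-> /= oJ /negP[]]; rewrite sub1set.
Qed.

Definition max_vertex T := \max_(i in T) (i : nat).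

Lemma max_vertex_o T : o \in T -> max_vertex T = n.
Proof.
move=> oT; apply/eqP; rewrite eqn_leq (@leq_bigmax_cond _ _ (fun i : V => i : nat) o) //.
by rewrite andbT; apply/bigmax_leqP => i _; rewrite -ltnS.
Qed.

Lemma max_vertex_seg c d : (c <= d < n)%N -> max_vertex (seg c d) = d.
Proof.
move=> cd; apply/eqP; rewrite eqn_leq; apply/andP; split.
  by apply/bigmax_leqP => i; rewrite inE; lia.
have dseg : (inord d : V) \in seg c d by rewrite inE inordK; lia.
by have := @leq_bigmax_cond _ _ (fun i : V => i : nat) _ dseg; rewrite inordK //; lia.
Qed.

Local Open Scope ring_scope.

Lemma delta_seg_witness c d T : (c <= d < n)%N -> connected_shape T ->
  #|T| = #|seg c d| -> T != seg c d -> (max_vertex T <= d)%N -> 'e_(inord d) \in hyp T.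
Proof.
move=> cd sT; rewrite -[_ \in _]negbK delta_notin_hyp.
case: sT => [c' d' cd' | c' d' _ _ | ]; last 2 first.
- by rewrite max_vertex_o ?setU11 //; lia.
- by rewrite max_vertex_o ?set11 //; lia.
rewrite !card_seg ?max_vertex_seg; try lia; move=> ccd neq d'd.
rewrite inE inordK; last lia.
have /negP : d' != d by apply: contraNneq neq => dd; apply/eqP/setP => u; rewrite !inE; lia.
lia.
Qed.

Lemma residue_fork_witness c d T : (c <= k.-1 <= d)%N -> (d < n)%N -> connected_shape T ->
  #|T| = #|o |: seg c d| -> T != o |: seg c d -> residue_row (d.+2 - c) d.+1 \in hyp T.
Proof.
move=> cpd dn sT; rewrite card_fork; try lia.
case: sT => [c' d' cd' | c' d' cpd' dn' | ]; last by rewrite cards1; lia.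
  rewrite card_seg; try lia; move=> size_eq _.
  by rewrite residue_row_hyp ?card_seg ?residue_count_window; lia.
rewrite card_fork; try lia; move=> size_eq neq.
rewrite residue_row_hyp ?card_fork ?residue_count_setU1o; try lia.
rewrite (@residue_count_overlapping_seg _ c d c' d' k.-1) //; try lia.
by apply: contraNneq neq => cc; apply/eqP/setP => u; rewrite !inE; lia.
Qed.

Lemma residue_fork_notin c d : (c <= k.-1 <= d)%N -> (d < n)%N ->
  residue_row (d.+2 - c) d.+1 \notin hyp (o |: seg c d).
Proof.
move=> cpd dn.
by rewrite residue_row_hyp ?card_fork ?residue_count_setU1o ?residue_count_short //; lia.
Qed.

Lemma delta_pendant_witness T : #|T| = 1%N -> T != [set o] -> 'e_o \in hyp T.
Proof.
move=> /eqP /cards1P[a ->]; rewrite -[_ \in _]negbK delta_notin_hyp inE.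
by apply: contraNneq => <-.
Qed.

Lemma connected_shape_witness S : connected_shape S -> exists2 v, v \notin hyp S &
  forall T, connected_shape T -> #|T| = #|S| -> T != S -> (max_vertex T <= max_vertex S)%N ->
    v \in hyp T.
Proof.
case=> [c d cd | c d cpd dn |].
- exists 'e_(inord d); first by rewrite delta_notin_hyp inE inordK; lia.
  by rewrite max_vertex_seg // => T; apply: delta_seg_witness.
- exists (residue_row (d.+2 - c) d.+1); first exact: residue_fork_notin.
  by move=> T sT cT neq _; apply: residue_fork_witness.
- exists 'e_o; first by rewrite delta_notin_hyp set11.
  by move=> T _; rewrite cards1 => cT neq _; apply: delta_pendant_witness.
Qed.

Lemma residue_pv_in_hyp S h : connected_shape S -> #|S| = h -> (1 < h)%N ->
  residue_row h k.-1 \in hyp S.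
Proof.
case=> [c d cd | c d cpd dn |]; last by rewrite cards1 => <-.
- rewrite card_seg; try lia; move=> cS h1.
  by rewrite residue_row_hyp ?card_seg ?residue_count_window //; lia.
- rewrite card_fork; try lia; move=> cS h1.
  rewrite residue_row_hyp ?card_fork ?residue_count_setU1o; try lia.
  by rewrite (@residue_count_seg _ _ _ _ pv) ?inE ?pvE //; lia.
Qed.

Local Close Scope ring_scope.

Section SizePartition.
Variable Id : {set {set V}}.
Hypothesis IdG : lower_ideal G Id.

Lemma ideal_connected_shape J : J \in Id -> connected_shape J.
Proof. by move=> /(subsetP IdG.1) /mem_connected_sets. Qed.

Lemma ideal_card_gt0 J : J \in Id -> 0 < #|J|.
Proof. by move=> /(subsetP IdG.1); rewrite inE card_gt0 => /andP[]. Qed.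

Definition max_vertex_le := [rel S T : {set V} | max_vertex S <= max_vertex T].

Definition size_block h := sort max_vertex_le [seq J <- enum Id | #|J : {set V}| == h].

Definition lower_blocks j := flatten [seq size_block h | h <- iota 1 j].

Definition max_size := \max_(J in Id) #|J|.

Definition size_partition := [seq map (@hyp n.+1) (size_block h) | h <- iota 1 max_size].

Lemma mem_size_block h J : (J \in size_block h) = (J \in Id) && (#|J| == h).
Proof. by rewrite mem_sort mem_filter mem_enum andbC. Qed.

Lemma uniq_size_block h : uniq (size_block h).
Proof. by rewrite sort_uniq filter_uniq // enum_uniq. Qed.

Lemma lower_blocksS j : lower_blocks j.+1 = lower_blocks j ++ size_block j.+1.
Proof.
rewrite /lower_blocks; have -> : iota 1 j.+1 = iota 1 j ++ [:: j.+1].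
  by rewrite -(addn1 j) iotaD /= add1n addn1.
by rewrite map_cat flatten_cat /= cats0.
Qed.

Lemma mem_lower_blocks j J : (J \in lower_blocks j) = (J \in Id) && (#|J| <= j).
Proof.
elim: j => [|j IH].
  by rewrite in_nil; case: (boolP (J \in Id)) => // /ideal_card_gt0; rewrite leqn0 => /gtn_eqF ->.
by rewrite lower_blocksS mem_cat IH mem_size_block -andb_orr; case: (_ \in _); lia.
Qed.

Lemma uniq_lower_blocks j : uniq (lower_blocks j).
Proof.
elim: j => [|j IH] //; rewrite lower_blocksS cat_uniq IH uniq_size_block andbT /=.
apply/hasPn => J; rewrite mem_size_block mem_lower_blocks => /andP[_ /eqP ->].
by rewrite ltnn andbF.
Qed.

Lemma size_block_nonnil h : 0 < h <= max_size -> size_block h != [::].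
Proof.
move=> /andP[h0 hmax]; have [Id0 | IdN0] := posnP #|Id|.
  by move: hmax; rewrite /max_size big_pred0 => [|J]; [lia | apply: card0_eq].
have [I II maxI] := @eq_bigmax_cond _ (mem Id) (fun J : {set V} => #|J|) IdN0.
have [T sT [subT cT]] :
    exists2 T, connected_shape T & T \subset I /\ #|T| = h.
  by apply: connected_shape_subset_of_card (ideal_connected_shape II) _; rewrite h0 -maxI.
have TI : T \in Id by apply: IdG.2 II (proj2 (mem_connected_sets T) sT) subT.
by apply/eqP => bnil; move: (mem_size_block h T); rewrite bnil TI cT eqxx.
Qed.

Lemma size_block_independent h : 0 < h ->
  (\dim (\bigcap_(H <- map (@hyp n.+1) (size_block h)) H) + size (size_block h))%N = n.+1.
Proof.
move=> h0; set s := size_block h; rewrite -(size_map (@hyp n.+1)); apply: eq_trans (dim_rV n.+1).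
have inId i : i < size s -> nth set0 s i \in Id /\ #|nth set0 s i| = h.
  by move=> lti; have := mem_nth set0 lti; rewrite mem_size_block => /andP[-> /eqP].
apply: dimv_bigcap_hyperplanes => [|i]; first by apply/allP => _ /mapP[J + ->];
  rewrite mem_size_block => /andP[/(subsetP IdG.1)]; rewrite inE => /andP[/hyperplane_hyp].
rewrite size_map => lti; have [SI cS] := inId i lti.
have [v vS vT] := connected_shape_witness (ideal_connected_shape SI).
apply: (@notsubv_bigcap_take _ _ _ _ v) => [j ltj|]; last by rewrite (nth_map set0).
have ltjs := ltn_trans ltj lti; have [TI cT] := inId j ltjs.
rewrite (nth_map set0) //; apply: vT; rewrite ?cT ?cS ?nth_uniq ?uniq_size_block ?(ltn_eqF ltj) //.
  exact: ideal_connected_shape.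
have trans : transitive max_vertex_le by move=> ? ? ?; apply: leq_trans.
apply: (sorted_leq_nth trans (fun _ => leqnn _)); rewrite ?inE ?(ltnW ltj) //.
by apply: sort_sorted => ? ?; apply: leq_total.
Qed.

Lemma size_block_avoids_lower j : exists2 v,
  v \in (\bigcap_(H <- map (@hyp n.+1) (size_block j.+1)) H)%VS &
  forall H, H \in map (@hyp n.+1) (lower_blocks j) -> v \notin H.
Proof.
case: j => [|j]; first by exists 0%R; rewrite ?mem0v.
exists (residue_row j.+2 k.-1).
  rewrite memv_bigcap; apply/allP => _ /mapP[S + ->]; rewrite mem_size_block => /andP[SI /eqP cS].
  exact: residue_pv_in_hyp (ideal_connected_shape SI) cS _.
move=> _ /mapP[J + ->]; rewrite mem_lower_blocks => /andP[JI cJ].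
by apply: residue_row_notin_hyp; rewrite ideal_card_gt0.
Qed.

Lemma size_block_cap_count j I : I \in size_block j.+1 ->
  (size (map (@hyp n.+1) (lower_blocks j)) -
   size (undup [seq (hyp I :&: H)%VS | H <- map (@hyp n.+1) (lower_blocks j)]))%N = j.
Proof.
rewrite mem_size_block => /andP[II /eqP cI].
have [a aI cuts_a] := card_cuts (ideal_connected_shape II).
have memL J : (J \in lower_blocks j) = (J \in Id) && (#|J| < #|I|) by rewrite mem_lower_blocks cI.
rewrite size_map -map_comp -(size_undup_cap_hyp IdG II aI memL (uniq_lower_blocks j)).
by rewrite cuts_a cI addKn.
Qed.

Lemma nth_size_partition j : j < max_size ->
  nth [::] size_partition j = map (@hyp n.+1) (size_block j.+1).
Proof. by move=> lt; rewrite (nth_map 0) ?size_iota // nth_iota // add1n. Qed.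

Lemma take_size_partition j : j <= max_size ->
  flatten (take j size_partition) = map (@hyp n.+1) (lower_blocks j).
Proof. by move=> le; rewrite -map_take take_iota (minn_idPl le) map_flatten -map_comp. Qed.

Lemma perm_size_partition : perm_eq (flatten size_partition) (undup (ideal_arr Id)).
Proof.
rewrite -(take_size size_partition) take_size_partition ?size_map ?size_iota //.
rewrite undup_id ?undup_uniq //; apply: uniq_perm; last 1 first.
- move=> H; rewrite mem_undup; apply: eq_mem_map => J; rewrite mem_lower_blocks mem_enum.
  by apply/andb_idr => JI; apply: (@leq_bigmax_cond _ (mem Id) (fun J : {set V} => #|J|)).
- by rewrite map_inj_uniq ?uniq_lower_blocks //; apply: hyp_inj.
- exact: undup_uniq.
Qed.

End SizePartition.

End AlmostPathGraph.

Theorem mainTheorem13 (n k : nat) (Hk1 : (1 <= k)%N) (Hkn : (k <= n)%N)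
    (Id : {set {set 'I_(n.+1)}}) :
  lower_ideal (@almost_path_edge n k) Id ->
  MAT_free (ideal_arr Id).
Proof.
move=> IdG; exists (size_partition Id); split; [|split].
- apply/allP => _ /mapP[h + ->]; rewrite mem_iota -size_eq0 size_map size_eq0 => hr.
  by apply: (size_block_nonnil Hk1 Hkn IdG); rewrite -ltnS -add1n.
- exact: (perm_size_partition Hk1 Hkn IdG).
move=> j; rewrite size_map size_iota => ltj /=.
rewrite nth_size_partition // take_size_partition 1?ltnW //.
split; [|split].
- have := size_block_independent Hk1 Hkn IdG (ltn0Sn j).
  by rewrite dim_rV size_map; lia.
- by have [v vX vA] := size_block_avoids_lower Hk1 Hkn IdG j; exists v.
- by move=> _ /mapP[I II ->]; apply: (size_block_cap_count Hk1 Hkn IdG).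
Qed.
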